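(* Let $d\ge1$ and $k\ge d-1$ be integers. Then every injective function $f\colon\mathbb{R}^{k+1}\to\mathbb{R}^d$ satisfies $\alpha(f)\ge c_{d-1,k}$, and every injective function $f\colon S^k\to\mathbb{R}^d$ satisfies $\alpha(f)\ge c_{d-1,k}$ (functions not assumed continuous).
   Context: For a topological space $X$, $\mathrm{Conf}_2(X)=\{(x,y)\in X\times X: x\neq y\}$ with the subspace topology. Spheres carry the geodesic metric $d(u,v)=\arccos\langle u,v\rangle$. For a topological space $X$ and a metric space $Y$, $\delta(g)=\inf\{\delta\ge 0 : \text{for every } x\in X \text{ there is an open neighborhood } U_x \text{ of } x \text{ with } \operatorname{diam}(g(U_x))\le\delta\}$. For injective $f\colon X\to\mathbb{R}^d$, $\Phi_f(x,y)=\frac{f(x)-f(y)}{\|f(x)-f(y)\|}\in S^{d-1}$ and $\alpha(f)=\delta(\Phi_f)$. For a metric space $Y$ and $r\ge0$, $\mathrm{VR}(Y;r)$ is the Vietoris–Rips complex (simplices: finite subsets of diameter $\le r$), geometrically realized. For $k\ge n\ge0$, $c_{n,k}=\inf\{r\ge0:\text{there is a continuous } \mathbb{Z}/2\text{-equivariant map } S^k\to\mathrm{VR}(S^n;r)\}$, where $\mathbb{Z}/2$ acts antipodally on $S^k$ and on $\mathrm{VR}(S^n;r)$ via the antipodal map on vertices. *)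

From HB Require Import structures.
From mathcomp Require Import all_boot all_order all_algebra.
From mathcomp Require Import all_classical all_reals all_analysis.
Set Implicit Arguments. Unset Strict Implicit. Unset Printing Implicit Defensive.
Import Order.TTheory GRing.Theory Num.Theory.
Local Open Scope classical_set_scope.
Local Open Scope ring_scope.

Section Defs.
Variable R : realType.

Definition dot (m : nat) (u v : 'rV[R]_m) : R := \sum_(i < m) u 0 i * v 0 i.
Definition enorm (m : nat) (u : 'rV[R]_m) : R := Num.sqrt (dot u u).

(* unit sphere in R^m, i.e. S^(m-1) *)
Definition sphere (m : nat) : set 'rV[R]_m := [set u | dot u u = 1].

Definition gdist (m : nat) (u v : 'rV[R]_m) : R := acos (dot u v).

Definition subopen (T : Type) (dist : T -> T -> R) (A U : set T) : Prop :=
  U `<=` A /\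
  forall x, U x -> exists2 e : R, 0 < e &
    forall y, A y -> dist x y < e -> U y.

Definition edist (m : nat) (x y : 'rV[R]_m) : R := enorm (x - y).
Definition pdist (m : nat) (p q : 'rV[R]_m * 'rV[R]_m) : R :=
  Num.max (edist p.1 q.1) (edist p.2 q.2).

Definition Conf2 (m : nat) (X : set 'rV[R]_m) : set ('rV[R]_m * 'rV[R]_m) :=
  [set p | X p.1 /\ X p.2 /\ p.1 <> p.2].

Definition diam_le (S : Type) (dS : S -> S -> R) (B : set S) (r : R) : Prop :=
  forall u v, B u -> B v -> dS u v <= r.

Definition delta (T S : Type) (distT : T -> T -> R) (A : set T)
    (dS : S -> S -> R) (g : T -> S) : R :=
  inf [set r : R | 0 <= r /\
        forall x, A x -> exists U : set T,
          [/\ subopen distT A U, U x & diam_le dS (g @` U) r]].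

Definition Phi (m d : nat) (f : 'rV[R]_m -> 'rV[R]_d) (p : 'rV[R]_m * 'rV[R]_m)
  : 'rV[R]_d := (enorm (f p.1 - f p.2))^-1 *: (f p.1 - f p.2).

Definition alpha (m d : nat) (X : set 'rV[R]_m) (f : 'rV[R]_m -> 'rV[R]_d) : R :=
  delta (@pdist m) (Conf2 X) (@gdist d) (Phi f).

Definition VRsimplex (n : nat) (r : R) (s : seq 'rV[R]_n.+1) : Prop :=
  (forall v, v \in s -> sphere v) /\
  (forall u v, u \in s -> v \in s -> gdist u v <= r).

(* A point of |VR(S^n;r)| is given by its barycentric coordinates t : vertices -> R,
   nonnegative, summing to 1, supported on a (finite) simplex. *)
Definition supported_on (n : nat) (t : 'rV[R]_n.+1 -> R) (s : seq 'rV[R]_n.+1) :=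
  forall v, t v != 0 -> v \in s.

Definition in_simplex (n : nat) (t : 'rV[R]_n.+1 -> R) (s : seq 'rV[R]_n.+1) :=
  [/\ supported_on t s, (forall v, 0 <= t v) & \sum_(v <- undup s) t v = 1].

Definition VRpoint (n : nat) (r : R) (t : 'rV[R]_n.+1 -> R) : Prop :=
  exists s, @VRsimplex n r s /\ in_simplex t s.

(* weak (coherent) topology: U is open iff its trace on every closed simplex is
   open in that simplex (with its Euclidean topology in barycentric coordinates) *)
Definition VRopen (n : nat) (r : R) (U : set ('rV[R]_n.+1 -> R)) : Prop :=
  U `<=` @VRpoint n r /\
  forall s, @VRsimplex n r s -> forall t, U t -> in_simplex t s ->
    exists2 e : R, 0 < e & forall t', in_simplex t' s ->
      (forall v, v \in s -> `|t' v - t v| < e) -> U t'.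

Definition VRcontinuous (k n : nat) (r : R)
    (g : 'rV[R]_k.+1 -> ('rV[R]_n.+1 -> R)) : Prop :=
  (forall x, sphere x -> @VRpoint n r (g x)) /\
  forall U, @VRopen n r U -> subopen (@edist k.+1) (@sphere k.+1) [set x | sphere x /\ U (g x)].

Definition antipodal_equivariant (k n : nat)
    (g : 'rV[R]_k.+1 -> ('rV[R]_n.+1 -> R)) : Prop :=
  forall x, sphere x -> forall v, g (- x) v = g x (- v).

Definition c_nk (n k : nat) : R :=
  inf [set r : R | 0 <= r /\ exists g : 'rV[R]_k.+1 -> ('rV[R]_n.+1 -> R),
         @VRcontinuous k n r g /\ antipodal_equivariant g].

End Defs.

From Pilot Require Import Defs.
From HB Require Import structures.
From mathcomp Require Import all_boot all_order all_algebra.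
From mathcomp Require Import all_classical all_reals all_analysis.
From mathcomp Require Import lra.
Set Implicit Arguments. Unset Strict Implicit. Unset Printing Implicit Defensive.
Import Order.TTheory GRing.Theory Num.Theory.
Import numFieldTopology.Exports numFieldNormedType.Exports.
Local Open Scope classical_set_scope.
Local Open Scope ring_scope.

(* If [r] is admissible in the definition of [alpha X f], the odd map
   [x |-> Phi_f(x, -x)] from [S^k] to [S^(d-1)] sends small neighbourhoods to sets of
   geodesic diameter at most [r].  Choose such radii [rho], cover [S^k] by finitely
   many balls [B(c, rho c / 4)], symmetrise the cover under [x |-> -x] and take a
   subordinate partition of unity [w_c].  Then [x |-> sum_c w_c(x) [Phi_f(c, -c)]] is
   a continuous equivariant map [S^k -> VR(S^(d-1); r)]: every centre active near [x]
   lies within [rho c / 2] of [x], so two such centres are within [rho] of the one with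
   the larger radius and their images span a simplex.  Hence every [r] admissible
   for [alpha] is admissible for [c_{d-1,k}]. *)

Section Euclidean.
Variable R : realType.

(* Outside [-1, 1] the junk value of [acos] is the default point [0]. *)
Lemma gdist_le_pi m (u v : 'rV[R]_m) : gdist u v <= pi.
Proof.
rewrite /gdist unlock; case: xgetP => [y -> [] /andP[] //|_].
exact: pi_ge0.
Qed.

Lemma dotNN m (u v : 'rV[R]_m) : dot (- u) (- v) = dot u v.
Proof. by apply: eq_bigr => i _; rewrite !mxE mulrNN. Qed.

Lemma dotZZ m (a : R) (u : 'rV[R]_m) : dot (a *: u) (a *: u) = a ^+ 2 * dot u u.
Proof. by rewrite /dot mulr_sumr; apply: eq_bigr => i _; rewrite !mxE mulrACA. Qed.

Lemma dotxx_ge0 m (u : 'rV[R]_m) : 0 <= dot u u.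
Proof. by apply: sumr_ge0 => i _; rewrite -expr2 sqr_ge0. Qed.

Lemma dotxx_eq0 m (u : 'rV[R]_m) : (dot u u == 0) = (u == 0).
Proof.
apply/idP/eqP => [|->]; last by rewrite /dot big1 // => i _; rewrite mxE mul0r.
rewrite psumr_eq0 => [/allP u0|i _]; last by rewrite -expr2 sqr_ge0.
apply/rowP => i; rewrite mxE; apply/eqP.
by rewrite -sqrf_eq0 expr2; exact: u0 (mem_index_enum i).
Qed.

Lemma enormN m (u : 'rV[R]_m) : enorm (- u) = enorm u.
Proof. by rewrite /enorm dotNN. Qed.

Lemma sphereN m (u : 'rV[R]_m) : sphere u -> sphere (- u).
Proof. by rewrite /sphere /= dotNN. Qed.

Lemma sphere_neq0 m (u : 'rV[R]_m) : sphere u -> u != 0.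
Proof. by rewrite /sphere /= -dotxx_eq0 => ->; rewrite oner_eq0. Qed.

Lemma sphere_neqN m (u : 'rV[R]_m) : sphere u -> u != - u.
Proof.
move=> /sphere_neq0; apply: contra => /eqP uN; apply/eqP/rowP => i.
by apply/eqP; rewrite mxE -eqNr {2}uN mxE.
Qed.

Lemma sphere_normalize m (u : 'rV[R]_m) : u != 0 -> sphere ((enorm u)^-1 *: u).
Proof.
rewrite -dotxx_eq0 => u0; have u_gt0 : 0 < dot u u by rewrite lt_def u0 dotxx_ge0.
by rewrite /sphere /= dotZZ exprVn sqr_sqrtr ?mulVf ?gt_eqF // ltW.
Qed.

Lemma coord_le_enorm m (u : 'rV[R]_m) i : `|u 0 i| <= enorm u.
Proof.
rewrite /enorm -sqrtr_sqr ler_sqrt ?dotxx_ge0 // /dot (bigD1 i) //= -expr2 lerDl.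
by apply: sumr_ge0 => j _; rewrite -expr2 sqr_ge0.
Qed.

Lemma norm_le_enorm m (u : 'rV[R]_m) : `|u| <= enorm u.
Proof.
rewrite [leLHS]mx_normrE; apply/bigmax_leP; split; first exact: sqrtr_ge0.
by move=> [a i] _ /=; rewrite (ord1 a); exact: coord_le_enorm.
Qed.

Lemma enorm_le_norm m (u : 'rV[R]_m) : enorm u <= m%:R * `|u|.
Proof.
have coord_le_norm i : `|u 0 i| <= `|u|.
  by rewrite [leRHS]mx_normrE; apply/bigmax_geP; right; exists (0, i).
rewrite /enorm -(ger0_norm (_ : 0 <= m%:R * `|u|)) ?mulr_ge0 //.
rewrite -sqrtr_sqr ler_sqrt ?sqr_ge0 //.
apply: (@le_trans _ _ (\sum_(i < m) `|u| ^+ 2)).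
  apply: ler_sum => i _; rewrite -expr2 -real_normK ?num_real //.
  by rewrite lerXn2r ?nnegrE ?coord_le_norm.
rewrite sumr_const card_ord -[leLHS]mulr_natr exprMn [leLHS]mulrC.
apply: ler_wpM2r; first exact: sqr_ge0.
by case: m {u coord_le_norm} => [|m]; rewrite ?expr0n // ler_eXnr ?ler1n.
Qed.

Lemma dotxx_continuous m : continuous (fun u : 'rV[R]_m => dot u u).
Proof.
move=> u; apply: cvg_big => [||i _]; [exact: add_continuous|exact: nbhs_filter|].
have ui := @coord_continuous R 1 m 0 i u; exact: (cvgM ui ui).
Qed.

Lemma sphere_compact m : compact (@sphere R m).
Proof.
apply: bounded_closed_compact.
  exists 1; split; first exact: num_real.
  move=> M M1 x sx; apply: le_trans (norm_le_enorm x) _.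
  by rewrite /enorm sx sqrtr1 ltW.
have -> : @sphere R m = (fun u => dot u u) @^-1` [set 1] by [].
by apply: preimage_closed; [move=> u _; exact: dotxx_continuous | exact: closed_eq].
Qed.

End Euclidean.

Lemma filter_all_in (T : Type) (I : eqType) (F : set_system T) (s : seq I)
    (P : I -> set T) : Filter F -> (forall i, i \in s -> F (P i)) ->
  F [set x | forall i, i \in s -> P i x].
Proof.
move=> FF; elim: s => [|a s IHs] Fs; first by apply: filterE => x i; rewrite in_nil.
have Fa := Fs a (mem_head a s).
have {IHs} : F [set x | forall i, i \in s -> P i x].
  by apply: IHs => i si; apply: Fs; rewrite in_cons si orbT.
apply: filterS2 Fa => x Pa Ps i; rewrite in_cons => /predU1P[-> //|]; exact: Ps.
Qed.

Lemma compact_ball_cover (R : realType) (V : pseudoMetricNormedZmodType R) (A : set V)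
    (rad : V -> R) : compact A -> (forall x, 0 < rad x) ->
  exists2 C : seq V, (forall c, c \in C -> A c) &
    forall y, A y -> exists2 c, c \in C & ball c (rad c) y.
Proof.
move=> + rad_gt0; rewrite compact_cover => /(_ _ A (fun c => ball c (rad c))).
case=> [c _|y Ay|D DA Dcov]; [exact: ball_open | by exists y => //; exact: ballxx |].
exists (finmap.enum_fset D) => [c /DA|y /Dcov[c Dc yc]]; first by rewrite inE.
by exists c.
Qed.

Section Bumps.
Variables (R : realType) (V : normedModType R) (L : seq V) (rad : V -> R).

Definition bump (c y : V) : R := Num.max 0 (rad c - `|y - c|).
Definition bump_sum (y : V) : R := \sum_(c <- L) bump c y.
Definition weight (c y : V) : R := bump c y / bump_sum y.

Lemma bump_ge0 c y : 0 <= bump c y.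
Proof. by rewrite le_max lexx. Qed.

Lemma bump_gt0 c y : (0 < bump c y) = (`|y - c| < rad c).
Proof. by rewrite lt_max ltxx subr_gt0. Qed.

Lemma bump_sum_gt0 y : (exists2 c, c \in L & `|y - c| < rad c) -> 0 < bump_sum y.
Proof.
move=> [c cL yc]; rewrite /bump_sum (perm_big _ (perm_to_rem cL)) big_cons.
by rewrite ltr_wpDr ?sumr_ge0 ?bump_gt0 // => b _; exact: bump_ge0.
Qed.

Lemma bump_continuous c : continuous (bump c).
Proof.
apply: max_fun_continuous; first exact: cst_continuous.
move=> y; apply: cvgB; first exact: cvg_cst.
apply: cvg_norm; apply: cvgB; [exact: cvg_id | exact: cvg_cst].
Qed.

Lemma bump_sum_continuous : continuous bump_sum.
Proof.
by move=> y; apply: cvg_big => [|c _]; [exact: add_continuous | exact: bump_continuous].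
Qed.

Lemma weight_ge0 c y : 0 <= weight c y.
Proof. by rewrite divr_ge0 ?bump_ge0 ?sumr_ge0 // => b _; exact: bump_ge0. Qed.

Lemma weight_neq0 c y : weight c y != 0 -> `|y - c| < rad c.
Proof.
rewrite mulf_eq0 negb_or => /andP[bc _].
by rewrite -bump_gt0 lt_def bc bump_ge0.
Qed.

Lemma weight_continuous c y : 0 < bump_sum y -> {for y, continuous (weight c)}.
Proof.
move=> sy; apply: cvgM; first exact: bump_continuous.
by apply: cvgV; [rewrite gt_eqF | exact: bump_sum_continuous].
Qed.

Lemma sum_weight y : 0 < bump_sum y -> \sum_(c <- L) weight c y = 1.
Proof. by move=> sy; rewrite -mulr_suml divff // gt_eqF. Qed.

Lemma weightNN c y : (forall x, rad (- x) = rad x) -> perm_eq L (map -%R L) ->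
  weight (- c) (- y) = weight c y.
Proof.
move=> radN LN; have bumpNN b x : bump (- b) (- x) = bump b x.
  by rewrite /bump radN -opprD normrN.
rewrite /weight bumpNN /bump_sum (perm_big _ LN) big_map.
by under eq_bigr do rewrite bumpNN.
Qed.

End Bumps.

Lemma sum_indicator_uniq (R : nzRingType) (T : eqType) (s : seq T) (a : T) :
  uniq s -> \sum_(v <- s) ((v == a)%:R : R) = (a \in s)%:R.
Proof.
move=> us; have [sa|sNa] := boolP (a \in s).
  by rewrite (bigD1_seq a) //= eqxx big1 ?addr0 // => v /negPf ->.
by rewrite big1_seq // => v /andP[_]; case: eqVneq sNa => // -> /negPf->.
Qed.

Section VRmap.
Variables (R : realType) (n k : nat) (r : R) (G : 'rV[R]_k.+1 -> 'rV[R]_n.+1).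
Hypothesis G_sphere : forall x, sphere x -> sphere (G x).
Hypothesis G_odd : forall x, sphere x -> G (- x) = - G x.

Variable rho : 'rV[R]_k.+1 -> R.
Hypothesis rho_gt0 : forall x, 0 < rho x.
Hypothesis rhoN : forall x, rho (- x) = rho x.
Hypothesis rho_diam : forall x y z, sphere x -> sphere y -> sphere z ->
  `|x - y| < rho x -> `|x - z| < rho x -> gdist (G y) (G z) <= r.

Variable C : seq 'rV[R]_k.+1.
Hypothesis C_sphere : forall c, c \in C -> sphere c.
Hypothesis C_cover : forall y, sphere y -> exists2 c, c \in C & `|y - c| < rho c / 4.

Let L := C ++ map -%R C.
Let rad c := rho c / 4.

Lemma L_sphere c : c \in L -> sphere c.
Proof. by rewrite mem_cat => /orP[/C_sphere //|/mapP[b /C_sphere + ->]]; exact: sphereN. Qed.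

Lemma L_symmetric : perm_eq L (map -%R L).
Proof. by rewrite /L map_cat (mapK opprK) perm_catC. Qed.

Lemma bump_sum_sphere_gt0 y : sphere y -> 0 < bump_sum L rad y.
Proof.
move=> /C_cover[c cC yc]; apply: bump_sum_gt0; exists c => //.
by rewrite mem_cat cC.
Qed.

Definition VRmap (y : 'rV[R]_k.+1) (v : 'rV[R]_n.+1) : R :=
  \sum_(c <- L) weight L rad c y * (v == G c)%:R.

Definition near_vertices (x : 'rV[R]_k.+1) : seq 'rV[R]_n.+1 :=
  [seq G c | c <- L & `|x - c| < rho c / 2].

Lemma near_vertices_simplex x : VRsimplex r (near_vertices x).
Proof.
split=> [v /mapP[c]|u v /mapP[a] + -> /mapP[b] + ->].
  by rewrite mem_filter => /andP[_ /L_sphere /G_sphere + ->].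
rewrite !mem_filter => /andP[xa /L_sphere sa] /andP[xb /L_sphere sb].
have dist_ab : `|a - b| < rho a / 2 + rho b / 2.
  by apply: le_lt_trans (ler_distD x a b) _; rewrite distrC ltrD.
have := rho_gt0 a; have := rho_gt0 b.
have [ba|ab] := leP (rho b) (rho a) => ra rb.
  by apply: (rho_diam sa); rewrite ?subrr ?normr0 //; lra.
by apply: (rho_diam sb); rewrite ?subrr ?normr0 1?distrC //; lra.
Qed.

Lemma VRmap_in_simplex x y : sphere y ->
    (forall c, c \in L -> `|y - c| < rad c -> `|x - c| < rho c / 2) ->
  in_simplex (VRmap y) (near_vertices x).
Proof.
move=> sy near_x.
have w_near c : c \in L -> weight L rad c y != 0 -> G c \in near_vertices x.
  by move=> cL /weight_neq0 yc; apply: map_f; rewrite mem_filter near_x.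
split.
- move=> v; apply: contraR => vx; apply/eqP/big1_seq => c /andP[_ cL].
  have [->|wc] := eqVneq (weight L rad c y) 0; first by rewrite mul0r.
  case: eqP => [vc|_]; last by rewrite mulr0.
  by rewrite vc w_near in vx.
- by move=> v; apply: sumr_ge0 => c _; rewrite mulr_ge0 ?weight_ge0.
rewrite exchange_big /= -[RHS](sum_weight (bump_sum_sphere_gt0 sy)).
apply: eq_big_seq => c cL; rewrite -mulr_sumr sum_indicator_uniq ?undup_uniq //.
have [->|wc] := eqVneq (weight L rad c y) 0; first by rewrite mul0r.
by rewrite mem_undup w_near ?mulr1.
Qed.

Lemma VRmap_equivariant : antipodal_equivariant VRmap.
Proof.
have radN b : rad (- b) = rad b by rewrite /rad rhoN.
move=> x sx v; rewrite /VRmap (perm_big _ L_symmetric) big_map.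
apply: eq_big_seq => c cL; rewrite weightNN ?L_symmetric // (G_odd (L_sphere cL)).
by have -> : (v == - G c) = (- v == G c) by apply/eqP/eqP => [->|<-]; rewrite opprK.
Qed.

Lemma VRmap_dist_le x y v :
  `|VRmap y v - VRmap x v| <= \sum_(c <- L) `|weight L rad c y - weight L rad c x|.
Proof.
rewrite -sumrB; apply: le_trans (ler_norm_sum _ _ _) (ler_sum _ _) => c _.
by rewrite -mulrBl normrM ler_piMr //; case: eqP; rewrite ?normr0 ?normr1.
Qed.

Lemma near_VRmap x e : sphere x -> 0 < e -> \forall y \near x,
  (forall c, c \in L -> `|y - c| < rad c -> `|x - c| < rho c / 2) /\
  (forall v, `|VRmap y v - VRmap x v| < e).
Proof.
move=> sx e0.
have near_support : \forall y \near x,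
    forall c, c \in L -> `|y - c| < rad c -> `|x - c| < rho c / 2.
  apply: filter_all_in => c _; have rc := rho_gt0 c.
  have rc4 : 0 < rad c by rewrite divr_gt0.
  apply: filterS (@near_ball _ _ x _ rc4) => y; rewrite -ball_normE /= => xy yc.
  by apply: le_lt_trans (ler_distD y x c) _; rewrite /rad in xy yc *; lra.
have weights_cvg : (fun y => \sum_(c <- L) `|weight L rad c y - weight L rad c x|)
    @ x --> \sum_(c <- L) `|weight L rad c x - weight L rad c x|.
  apply: cvg_big => [||c _]; [exact: add_continuous | exact: nbhs_filter |].
  have wc := weight_continuous (c := c) (bump_sum_sphere_gt0 sx).
  exact: cvg_norm (cvgB wc (cvg_cst _)).
have weights_x : \sum_(c <- L) `|weight L rad c x - weight L rad c x| = 0.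
  by rewrite big1 // => c _; rewrite subrr normr0.
have := cvgr_lt (FF := nbhs_filter x) _ weights_cvg e.
rewrite weights_x => /(_ e0) near_weights.
apply: (filterS2 (nbhs_filter x) _ near_support near_weights) => y ? ?.
by split=> // v; apply: le_lt_trans (VRmap_dist_le x y v) _.
Qed.

Lemma VRmap_continuous : VRcontinuous r VRmap.
Proof.
have near_self x : sphere x -> in_simplex (VRmap x) (near_vertices x).
  move=> sx; apply: VRmap_in_simplex => // c _; have := rho_gt0 c; rewrite /rad; lra.
split=> [x sx|U [_ Uopen]].
  by exists (near_vertices x); split; [exact: near_vertices_simplex | exact: near_self].
split=> [x [] //|x [sx Ux]].
have [e e0 Ue] := Uopen _ (near_vertices_simplex x) _ Ux (near_self _ sx).
have /nbhs_ballP[d d0 near_d] := near_VRmap sx e0.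
exists d => // y sy xy; split => //.
have /near_d[yL yx] : ball x d y.
  by rewrite -ball_normE; exact: le_lt_trans (norm_le_enorm (x - y)) xy.
by apply: Ue => [|v _]; [exact: VRmap_in_simplex | exact: yx].
Qed.

End VRmap.

Definition sphere_locally_diam_le (R : realType) (k n : nat) (r : R)
    (G : 'rV[R]_k.+1 -> 'rV[R]_n.+1) : Prop :=
  forall x, sphere x -> exists2 e : R, 0 < e &
    diam_le (@gdist R n.+1) (G @` [set y | sphere y /\ Defs.edist x y < e]) r.

Section EquivariantMap.
Variables (R : realType) (n k : nat) (r : R) (G : 'rV[R]_k.+1 -> 'rV[R]_n.+1).

Lemma even_radius_of_locally_diam_le : sphere_locally_diam_le r G ->
  exists rho : 'rV[R]_k.+1 -> R, [/\ forall x, 0 < rho x, forall x, rho (- x) = rho x &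
    forall x y z, sphere x -> sphere y -> sphere z ->
      `|x - y| < rho x -> `|x - z| < rho x -> gdist (G y) (G z) <= r].
Proof.
move=> Gloc; have k_gt0 : 0 < k.+1%:R :> R by rewrite ltr0n.
have edist_lt (x y : 'rV[R]_k.+1) e : `|x - y| < e / k.+1%:R -> Defs.edist x y < e.
  by rewrite ltr_pdivlMr // mulrC; apply: le_lt_trans; exact: enorm_le_norm.
have radius x : exists rho : R, 0 < rho /\ (sphere x -> forall y z, sphere y -> sphere z ->
    `|x - y| < rho -> `|x - z| < rho -> gdist (G y) (G z) <= r).
  have [sx|nsx] := pselect (sphere x); last by exists 1; split=> // /nsx.
  have [e e0 Ge] := Gloc x sx; exists (e / k.+1%:R); split=> [|_ y z sy sz xy xz].
    exact: divr_gt0.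
  by apply: Ge; [exists y | exists z]; split=> //; exact: edist_lt.
have [rho0 rho0P] := choice radius.
exists (fun x => Num.min (rho0 x) (rho0 (- x))); split=> [x|x|x y z sx sy sz].
- by rewrite lt_min (rho0P x).1 (rho0P (- x)).1.
- by rewrite opprK minC.
rewrite !lt_min => /andP[xy _] /andP[xz _]; exact: (rho0P x).2.
Qed.

Lemma exists_equivariant_VRmap :
    (forall x, sphere x -> sphere (G x)) -> (forall x, sphere x -> G (- x) = - G x) ->
    sphere_locally_diam_le r G ->
  exists g : 'rV[R]_k.+1 -> ('rV[R]_n.+1 -> R), VRcontinuous r g /\ antipodal_equivariant g.
Proof.
move=> G_sphere G_odd /even_radius_of_locally_diam_le[rho [rho_gt0 rhoN rho_diam]].
have [C C_sphere C_ball] := compact_ball_cover (rad := fun c => rho c / 4)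
  (@sphere_compact R k.+1) (fun c => divr_gt0 (rho_gt0 c) (ltr0n _ 4)).
have C_cover y : sphere y -> exists2 c, c \in C & `|y - c| < rho c / 4.
  by move=> /C_ball[c cC]; rewrite -ball_normE /= distrC => yc; exists c.
exists (VRmap G rho C); split; first exact: VRmap_continuous.
exact: VRmap_equivariant.
Qed.

End EquivariantMap.

Section Alpha.
Variables (R : realType) (n k : nat) (X : set 'rV[R]_k.+1) (f : 'rV[R]_k.+1 -> 'rV[R]_n.+1).
Hypothesis sphere_X : forall x, sphere x -> X x.
Hypothesis f_inj : {in X &, injective f}.

Definition antipodal_direction (x : 'rV[R]_k.+1) : 'rV[R]_n.+1 := Phi f (x, - x).

Lemma Conf2_antipodal x : sphere x -> Conf2 X (x, - x).
Proof.
move=> sx; split; first exact: sphere_X.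
by split; [exact/sphere_X/sphereN | exact/eqP/sphere_neqN].
Qed.

Lemma antipodal_direction_sphere x : sphere x -> sphere (antipodal_direction x).
Proof.
move=> sx; apply: sphere_normalize; rewrite subr_eq0; apply: contra_neqN (sphere_neqN sx).
by move=> /eqP/f_inj; rewrite !inE; apply; [exact: sphere_X | exact/sphere_X/sphereN].
Qed.

Lemma antipodal_directionN x : antipodal_direction (- x) = - antipodal_direction x.
Proof. by rewrite /antipodal_direction /Phi /= opprK -opprB enormN scalerN. Qed.

Lemma antipodal_direction_locally_diam_le (r : R) :
    (forall p, Conf2 X p -> exists U, [/\ subopen (@pdist R k.+1) (Conf2 X) U, U p &
      diam_le (@gdist R n.+1) (Phi f @` U) r]) ->
  sphere_locally_diam_le r antipodal_direction.
Proof.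
move=> Phi_loc x sx; have [U [[_ U_open] Ux U_diam]] := Phi_loc _ (Conf2_antipodal sx).
have [e e0 near_U] := U_open _ Ux; exists e => // _ _ [y [sy xy] <-] [z [sz xz] <-].
have antipodal_in_U w : sphere w -> Defs.edist x w < e -> U (w, - w).
  move=> sw xw; apply: near_U; first exact: Conf2_antipodal.
  by rewrite /pdist /= /Defs.edist -opprD enormN maxxx.
by apply: U_diam; [exists (y, - y) | exists (z, - z)]; rewrite //; exact: antipodal_in_U.
Qed.

Lemma c_nk_le_alpha : c_nk R n k <= alpha X f.
Proof.
rewrite /c_nk /alpha /delta; set Sc := [set r : R | _].
apply: lb_le_inf => [|r [r0 Phi_loc]].
  exists pi; split=> [|p Xp]; first exact: pi_ge0.
  exists (Conf2 X); split=> //; first by split=> // q Xq; exists 1.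
  by move=> u v _ _; exact: gdist_le_pi.
apply: (@ge_inf _ Sc); first by exists 0 => ? [].
split=> //; apply: exists_equivariant_VRmap.
- exact: antipodal_direction_sphere.
- by move=> x _; exact: antipodal_directionN.
- exact: antipodal_direction_locally_diam_le.
Qed.

End Alpha.

Theorem corollary3p6 (R : realType) (d k : nat) :
  (1 <= d)%N -> (d.-1 <= k)%N ->
  (forall f : 'rV[R]_k.+1 -> 'rV[R]_d, injective f ->
     c_nk R d.-1 k <= alpha setT f) /\
  (forall f : 'rV[R]_k.+1 -> 'rV[R]_d, {in sphere (R:=R) (m:=k.+1) &, injective f} ->
     c_nk R d.-1 k <= alpha (sphere (m:=k.+1)) f).
Proof.
case: d => // d _ _; split=> f f_inj; apply: c_nk_le_alpha => //.
exact: in2W.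
Qed.
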